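(* Let $n\geq 2$. If $\prec_1,\ldots,\prec_n$ are linear orders on $D_n$ which realize the product order $<$ on $D_n$, then there are linear orders $\prec_1^*,\ldots,\prec_n^*$ on $\mathbb{Q}^n$ extending $\prec_1,\ldots,\prec_n$ respectively which realize the product order on $\mathbb{Q}^n$.
   Context: Fix $n\geq 2$ and a set $D_n\subseteq\mathbb{Q}^n$ which is dense in $\mathbb{Q}^n$ (product topology) and such that no two distinct points of $D_n$ share a common coordinate. The product order: $\mathbf{a}<\mathbf{b}$ iff $a_i\leq b_i$ for all $i$ and $\mathbf{a}\neq\mathbf{b}$. Linear orders $\prec_1,\ldots,\prec_n$ on a set realize a partial order $<$ on it if $<\;=\;\prec_1\cap\cdots\cap\prec_n$. *)

From mathcomp Require Import all_boot all_order all_algebra.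
Set Implicit Arguments. Unset Strict Implicit. Unset Printing Implicit Defensive.
Import Order.TTheory GRing.Theory Num.Theory.
Local Open Scope ring_scope.

Definition Qpt (n : nat) := {ffun 'I_n -> rat}.

Definition prod_lt (n : nat) (a b : Qpt n) : Prop :=
  (forall i, a i <= b i) /\ a <> b.

(* D is dense in Q^n (product topology): every nonempty basic open box
   prod_i (l_i, u_i) meets D. *)
Definition dense_Qn (n : nat) (D : Qpt n -> Prop) : Prop :=
  forall (l u x : Qpt n), (forall i, l i < x i < u i) ->
    exists d, D d /\ forall i, l i < d i < u i.

Definition no_common_coord (n : nat) (D : Qpt n -> Prop) : Prop :=
  forall d e, D d -> D e -> d <> e -> forall i, d i <> e i.

Definition linear_order_on (T : Type) (S : T -> Prop) (R : T -> T -> Prop) : Prop :=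
  (forall x, S x -> ~ R x x) /\
  (forall x y z, S x -> S y -> S z -> R x y -> R y z -> R x z) /\
  (forall x y, S x -> S y -> x <> y -> R x y \/ R y x).

Definition realizes_on (n : nat) (S : Qpt n -> Prop)
    (prec : 'I_n -> Qpt n -> Qpt n -> Prop) : Prop :=
  forall a b, S a -> S b -> (prod_lt a b <-> forall i, prec i a b).

(* For each coordinate j, some prec_i contains the strict j-th coordinate
   order on D.  Otherwise each prec_i reverses a pair d_i, e_i of D with
   d_i(j) < e_i(j), and density of D yields pairs (b_i, a_i) nested inside
   them with b_i(j) < a_i(j), and pairs (bb_m, aa_m), m <> j, with
   bb_m(m) < aa_m(m), such that (b_i, a_i) crosses (e_i, d_i) and every
   (bb_m, aa_m), and the (bb_m, aa_m) cross each other ((x, y) and (x', y')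
   cross when y < x' and y' < x in the product order).  Each such pair is
   reversed by some prec_k, never the same one for two crossing pairs: the
   n - 1 orders reversing the (bb_m, aa_m) are distinct, and the order g(i)
   reversing (b_i, a_i) is none of them and not prec_i, so g is constant with
   a fixed point.  Distinct coordinates need distinct orders, so by
   no_common_coord prec_i is exactly the c(i)-th coordinate order on D for a
   permutation c, and prec*_i compares the c(i)-th coordinate first and then
   lexicographically. *)

From mathcomp Require Import all_boot all_order all_algebra.
From mathcomp Require Import lra.
From Stdlib Require Import Classical IndefiniteDescription.
Set Implicit Arguments. Unset Strict Implicit. Unset Printing Implicit Defensive.
Import Order.TTheory GRing.Theory Num.Theory.
Local Open Scope ring_scope.

Section LinearOrder.
Variables (T : Type) (S : T -> Prop).

Lemma linear_order_irr R x : linear_order_on S R -> S x -> ~ R x x.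
Proof. by case=> irr _; apply: irr. Qed.

Lemma linear_order_trans R x y z : linear_order_on S R ->
  S x -> S y -> S z -> R x y -> R y z -> R x z.
Proof. by case=> _ [trans _]; apply: trans. Qed.

Lemma linear_order_total R x y : linear_order_on S R ->
  S x -> S y -> x <> y -> R x y \/ R y x.
Proof. by case=> _ [_ total]; apply: total. Qed.

Lemma linear_order_sub_iff R R' :
    linear_order_on S R -> linear_order_on S R' ->
    (forall x y, S x -> S y -> R' x y -> R x y) ->
  forall x y, S x -> S y -> R' x y <-> R x y.
Proof.
move=> lin lin' sub x y Sx Sy; split; first exact: sub.
move=> Rxy; have [exy|nexy] := classic (x = y).
  by subst y; case: (linear_order_irr lin Sx Rxy).
case: (linear_order_total lin' Sx Sy nexy) => // /(sub _ _ Sy Sx) Ryx.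
by case: (linear_order_irr lin Sx (linear_order_trans lin Sx Sy Sx Rxy Ryx)).
Qed.

End LinearOrder.

Lemma linear_order_key (T : Type) (d : Order.disp_t) (O : orderType d)
    (S : T -> Prop) (f : T -> O) :
  injective f -> linear_order_on S (fun x y => (f x < f y)%O).
Proof.
move=> f_inj; split; [|split].
- by move=> x _; rewrite ltxx.
- by move=> x y z _ _ _; apply: lt_trans.
- move=> x y _ _ nexy.
  by case: (ltgtP (f x) (f y)) => [||/f_inj //]; [left|right].
Qed.

Lemma ltxi_map (T : Type) (d : Order.disp_t) (O : porderType d)
    (f g : T -> O) (s : seq T) :
  (forall x, (f x <= g x)%O) -> map f s != map g s ->
  (map f s < map g s :> seqlexi O)%O.
Proof.
move=> le_fg; elim: s => [|x s IHs] //= ne_fg.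
rewrite ltxi_cons le_fg /=; apply/implyP => le_gf.
have efg : f x = g x by apply/le_anti; rewrite le_fg.
by apply: IHs; apply: contraNneq ne_fg => ->; rewrite efg.
Qed.

Lemma avoid_injective_image_const (T : finType) (j : T) (f g : T -> T) :
    {in [pred m | m != j] &, injective f} ->
    (forall i m, m != j -> g i != f m) ->
  forall i, g i = g j.
Proof.
move=> f_inj g_avoid i.
pose F m := if m == j then g j else f m.
have F_inj : injective F.
  move=> m1 m2; rewrite /F.
  case: eqVneq => [->|m1j]; case: eqVneq => [->|m2j] //.
  - by move=> efg; case/eqP: (g_avoid j m2 m2j).
  - by move=> efg; case/eqP: (g_avoid j m1 m1j).
  - exact: f_inj.
have /codomP [m] := injF_onto F_inj (g i).
by rewrite /F; case: eqVneq => // mj gi; case/eqP: (g_avoid i m mj).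
Qed.

Lemma exists_norm_bound (R : numDomainType) (T : finType) (F : T -> R) :
  exists M, forall t, `|F t| <= M.
Proof.
exists (\sum_t `|F t|) => t.
by rewrite (bigD1 t) //= lerDl sumr_ge0.
Qed.

Lemma prod_lt_of_lt n (k : 'I_n) (a b : Qpt n) :
  (forall i, a i < b i) -> prod_lt a b.
Proof.
move=> lt_ab; split=> [i|eab]; first exact/ltW/lt_ab.
by have := lt_ab k; rewrite eab ltxx.
Qed.

Lemma coord_linear_order n (D : Qpt n -> Prop) (k : 'I_n) :
  no_common_coord D -> linear_order_on D (fun a b => a k < b k).
Proof.
move=> hcoord; split; [|split].
- by move=> a _; rewrite ltxx.
- by move=> a b c _ _ _; apply: lt_trans.
- move=> a b Da Db neab.
  by case: ltgtP (hcoord a b Da Db neab k) => // _ _; [left|right].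
Qed.

Definition lexi_key n (k : 'I_n) (a : Qpt n) : seqlexi rat :=
  a k :: [seq a m | m <- enum 'I_n].

Lemma map_enum_ffun_inj n (a b : Qpt n) :
  [seq a m | m <- enum 'I_n] = [seq b m | m <- enum 'I_n] -> a = b.
Proof. by move/eq_in_map => eab; apply/ffunP => m; apply: eab; rewrite mem_enum. Qed.

Lemma lexi_key_inj n (k : 'I_n) : injective (lexi_key k).
Proof. by move=> a b [_ /map_enum_ffun_inj]. Qed.

Lemma lexi_key_lt_coord n (k : 'I_n) (a b : Qpt n) :
  a k < b k -> (lexi_key k a < lexi_key k b)%O.
Proof. by move=> lt_ab; rewrite ltxi_cons (ltW lt_ab) lt_geF. Qed.

Lemma lexi_key_lt_prod n (k : 'I_n) (a b : Qpt n) :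
  prod_lt a b -> (lexi_key k a < lexi_key k b)%O.
Proof.
move=> [le_ab neab]; rewrite ltxi_cons le_ab; apply/implyP => _.
by apply: ltxi_map => //; apply/eqP => /map_enum_ffun_inj.
Qed.

Section RealizingOrders.
Variables (n : nat) (D : Qpt n -> Prop) (prec : 'I_n -> Qpt n -> Qpt n -> Prop).
Hypotheses (hdense : dense_Qn D) (hlin : forall i, linear_order_on D (prec i))
  (hreal : realizes_on D prec).

Lemma dense_boxes (I : Type) (l u : I -> 'I_n -> rat) :
    (forall i k, l i k < u i k) ->
  exists x : I -> Qpt n,
    forall i, [/\ D (x i), forall k, l i k < x i k & forall k, x i k < u i k].
Proof.
move=> lt_lu.
apply: (functional_choice (fun i (x : Qpt n) =>
  [/\ D x, forall k, l i k < x k & forall k, x k < u i k])) => i.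
pose c := [ffun k => (l i k + u i k) / 2].
have [|x [Dx hx]] := @hdense [ffun k => l i k] [ffun k => u i k] c.
  by move=> k; rewrite !ffunE; have := lt_lu i k => ?; apply/andP; split; lra.
by exists x; split=> // k; have /andP [] := hx k; rewrite !ffunE.
Qed.

Lemma prec_of_prod_lt i a b : D a -> D b -> prod_lt a b -> prec i a b.
Proof. by move=> Da Db ab; apply: (proj1 (hreal Da Db)). Qed.

Lemma prec_of_coord_gt k a b : D a -> D b -> b k < a k -> exists i, prec i b a.
Proof.
move=> Da Db lt_ba.
have neab : a <> b by move=> eab; move: lt_ba; rewrite eab ltxx.
have [i not_ab] : exists i, ~ prec i a b.
  apply: not_all_ex_not => all_ab; have [le_ab _] := proj2 (hreal Da Db) all_ab.
  by move: (le_ab k); rewrite leNgt lt_ba.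
exists i; by case: (linear_order_total (hlin i) Da Db neab).
Qed.

(* b <_i a <_i b' <_i a' <_i b, as the product order is contained in <_i. *)
Lemma prec_no_crossing i a b a' b' : D a -> D b -> D a' -> D b' ->
  prec i b a -> prec i b' a' -> prod_lt a b' -> prod_lt a' b -> False.
Proof.
move=> Da Db Da' Db' ba b'a' ab' a'b.
have tr := linear_order_trans (hlin i).
apply: (linear_order_irr (hlin i) Db); apply: (tr _ _ _ Db Da Db ba).
apply: (tr _ _ _ Da Db' Db (prec_of_prod_lt i Da Db' ab')).
exact: (tr _ _ _ Db' Da' Db b'a' (prec_of_prod_lt i Da' Db a'b)).
Qed.

Definition refines_coord (j i : 'I_n) :=
  forall d e, D d -> D e -> d j < e j -> prec i d e.

Lemma refines_coord_inj j j' i :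
  refines_coord j i -> refines_coord j' i -> j = j'.
Proof.
move=> ref ref'; apply: NNPP => /eqP nejj'.
pose l (x : bool) (k : 'I_n) : rat := if k == j then (if x then 0 else 2)
  else if k == j' then (if x then 2 else 0) else 0.
have [|x hx] := @dense_boxes bool l (fun x k => l x k + 1).
  by move=> x k; rewrite ltrDl.
have [Dd dlo dup] := hx true; have [De elo eup] := hx false.
move: (dlo j) (dup j) (elo j) (eup j) (dlo j') (dup j') (elo j') (eup j').
rewrite /l !eqxx [j' == j]eq_sym (negPf nejj') => *.
have de : prec i (x true) (x false) by apply: ref => //; lra.
have ed : prec i (x false) (x true) by apply: ref' => //; lra.
exact: (linear_order_irr (hlin i) Dd (linear_order_trans (hlin i) Dd De Dd de ed)).
Qed.

(* Off coordinate [j], aa m and bb m' take values ordered as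
   aa (k <> m) < bb (k = m') < aa (k = m) < bb (k <> m'). *)
Lemma outer_pairs j (M : rat) : 0 <= M ->
  exists aa bb : 'I_n -> Qpt n,
  [/\ forall m, [/\ D (aa m), D (bb m) & (m != j -> bb m m < aa m m)],
      forall m m', m != m' -> prod_lt (aa m) (bb m'),
      forall m k, aa m k < (if k == j then - M else M + 4)
    & forall m k, (if k == j then M else - M - 4) < bb m k].
Proof.
move=> M_ge0.
pose c m k : rat := if k == j then - M - 2 else if k == m then 2 else 0.
pose c' m k : rat := if k == j then M + 1 else if k == m then 1 else 3.
have [|aa haa] := @dense_boxes _ c (fun m k => c m k + 1).
  by move=> m k; rewrite ltrDl.
have [|bb hbb] := @dense_boxes _ c' (fun m k => c' m k + 1).
  by move=> m k; rewrite ltrDl.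
exists aa, bb; split.
- move=> m; have [Daa aalo _] := haa m; have [Dbb _ bbup] := hbb m.
  split=> // mj; move: (aalo m) (bbup m).
  by rewrite /c /c' (negPf mj) eqxx; lra.
- move=> m m' nemm'; have [_ _ aaup] := haa m; have [_ bblo _] := hbb m'.
  apply: (prod_lt_of_lt j) => k; move: (aaup k) (bblo k); rewrite /c /c'.
  case: eqP => _; first lra.
  case: (eqVneq k m) => [->|_]; first by rewrite (negPf nemm'); lra.
  by case: eqP => _; lra.
- move=> m k; have [_ _ aaup] := haa m; move: (aaup k); rewrite /c.
  by case: eqP => _; [|case: eqP => _]; lra.
- move=> m k; have [_ bblo _] := hbb m; move: (bblo k); rewrite /c'.
  by case: eqP => _; [|case: eqP => _]; lra.
Qed.

Lemma inner_pairs j (M : rat) (d e : 'I_n -> Qpt n) :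
    (forall i, d i j < e i j) ->
    (forall i k, [/\ - M <= d i k, d i k <= M, - M <= e i k & e i k <= M]) ->
  exists b a : 'I_n -> Qpt n, forall i,
  [/\ D (b i), D (a i), b i j < a i j,
      forall k, d i k < b i k /\ (if k == j then - M else M + 4) < b i k
    & forall k, a i k < e i k /\ a i k < (if k == j then M else - M - 4)].
Proof.
move=> lt_de bound; pose mid i := (d i j + e i j) / 2.
have [|b hb] := @dense_boxes _ (fun i k => if k == j then d i j else M + 4)
    (fun i k => if k == j then mid i else M + 5).
  by move=> i k; case: eqP => _; [have := lt_de i; rewrite /mid|]; lra.
have [|a ha] := @dense_boxes _ (fun i k => if k == j then mid i else - M - 5)
    (fun i k => if k == j then e i j else - M - 4).
  by move=> i k; case: eqP => _; [have := lt_de i; rewrite /mid|]; lra.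
exists b, a => i; have [Db blo bup] := hb i; have [Da alo aup] := ha i.
split=> //; first by move: (bup j) (alo j); rewrite eqxx; lra.
- move=> k; have [] := bound i j; have [] := bound i k.
  by move: (blo k); case: eqP => [->|]; lra.
- move=> k; have [] := bound i j; have [] := bound i k.
  by move: (aup k); case: eqP => [->|]; lra.
Qed.

Lemma crossing_configuration j (d e : 'I_n -> Qpt n) :
    (forall i, d i j < e i j) ->
  exists b a aa bb : 'I_n -> Qpt n,
  [/\ forall i, [/\ D (b i), D (a i), b i j < a i j,
                    prod_lt (d i) (b i) & prod_lt (a i) (e i)],
      forall m, [/\ D (aa m), D (bb m) & (m != j -> bb m m < aa m m)],
      forall i m, prod_lt (a i) (bb m) /\ prod_lt (aa m) (b i)
    & forall m m', m != m' -> prod_lt (aa m) (bb m')].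
Proof.
move=> lt_de.
have [M bound_M] :=
  exists_norm_bound (fun x : bool * 'I_n * 'I_n => (if x.1.1 then d else e) x.1.2 x.2).
have bound i k : [/\ - M <= d i k, d i k <= M, - M <= e i k & e i k <= M].
  have := bound_M (true, i, k); have := bound_M (false, i, k).
  by rewrite /= !ler_norml => /andP [? ?] /andP [? ?].
have M_ge0 : 0 <= M by have [] := bound j j; lra.
have [b [a hba]] := inner_pairs lt_de bound.
have [aa [bb [haabb cross_out aa_lo bb_hi]]] := outer_pairs j M_ge0.
exists b, a, aa, bb; split=> // [i|i m].
- have [Db Da ba db ae] := hba i.
  by split=> //; apply: (prod_lt_of_lt j) => k; [exact: (db k).1 | exact: (ae k).1].
- have [_ _ _ db ae] := hba i; split; apply: (prod_lt_of_lt j) => k.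
  + exact: lt_trans (ae k).2 (bb_hi m k).
  + exact: lt_trans (aa_lo m k) (db k).2.
Qed.

Lemma not_refines_coord j i : ~ refines_coord j i ->
  exists de : Qpt n * Qpt n, [/\ D de.1, D de.2, de.1 j < de.2 j & prec i de.2 de.1].
Proof.
move=> no_ref; apply: NNPP => none; apply: no_ref => d e Dd De lt_de.
have ne_de : d <> e by move=> ede; move: lt_de; rewrite ede ltxx.
case: (linear_order_total (hlin i) Dd De ne_de) => // ed.
by case: none; exists (d, e).
Qed.

Lemma exists_refines_coord j : exists i, refines_coord j i.
Proof.
apply: NNPP => no_ref.
have [de fail] := functional_choice _
  (fun i => not_refines_coord (fun ref => no_ref (ex_intro _ i ref))).
pose d i := (de i).1; pose e i := (de i).2.
have [|b [a [aa [bb [hba haabb cross_in cross_out]]]]] := @crossing_configuration j d e.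
  by move=> i; have [] := fail i.
have [g hg] : exists g, forall i, prec (g i) (b i) (a i).
  apply: (functional_choice (fun i i' => prec i' (b i) (a i))) => i.
  by have [Db Da ba _ _] := hba i; apply: prec_of_coord_gt Da Db ba.
have [f hf] : exists f, forall m, m != j -> prec (f m) (bb m) (aa m).
  apply: (functional_choice (fun m i' => m != j -> prec i' (bb m) (aa m))) => m.
  have [Daa Dbb bbaa] := haabb m; case: (eqVneq m j) => [_|mj]; first by exists j.
  by have [i' ?] := prec_of_coord_gt Daa Dbb (bbaa mj); exists i'.
have g_neq i : g i != i.
  apply/eqP => gi; have [Dd De _ ed] := fail i; have [Db Da _ db ae] := hba i.
  by apply: (prec_no_crossing Dd De Da Db ed _ db ae); move: (hg i); rewrite gi.
have g_avoid i m : m != j -> g i != f m.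
  move=> mj; apply/eqP => gf; have [Db Da _ _ _] := hba i; have [Daa Dbb _] := haabb m.
  have [abb aab] := cross_in i m.
  by apply: (prec_no_crossing Da Db Daa Dbb (hg i) _ abb aab); rewrite gf; apply: hf.
have f_inj : {in [pred m | m != j] &, injective f}.
  move=> m m' mj m'j fmm'; apply: NNPP => /eqP nemm'.
  have [Daa Dbb _] := haabb m; have [Daa' Dbb' _] := haabb m'.
  apply: (prec_no_crossing Daa Dbb Daa' Dbb' (hf m mj) _ (cross_out _ _ nemm')).
  - by rewrite fmm'; apply: hf.
  - by apply: cross_out; rewrite eq_sym.
have g_const := avoid_injective_image_const f_inj g_avoid.
by case/eqP: (g_neq (g j)); apply: g_const.
Qed.

Lemma exists_refining_coords :
  exists2 c : 'I_n -> 'I_n, bijective c & forall i, refines_coord (c i) i.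
Proof.
have [s s_ref] := functional_choice _ exists_refines_coord.
have s_inj : injective s.
  by move=> j j' sjj'; apply: (refines_coord_inj (s_ref j)); rewrite sjj'.
exists (invF s_inj); first by exists s; [apply: f_invF | apply: invF_f].
by move=> i; have := s_ref (invF s_inj i); rewrite f_invF.
Qed.

End RealizingOrders.

Theorem lemma6p4 (n : nat) (D : Qpt n -> Prop)
  (hn : (2 <= n)%N) (hdense : dense_Qn D) (hcoord : no_common_coord D)
  (prec : 'I_n -> Qpt n -> Qpt n -> Prop)
  (hlin : forall i, linear_order_on D (prec i))
  (hreal : realizes_on D prec) :
  exists precstar : 'I_n -> Qpt n -> Qpt n -> Prop,
    (forall i, linear_order_on (fun _ => True) (precstar i)) /\
    (forall i a b, D a -> D b -> (prec i a b <-> precstar i a b)) /\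
    realizes_on (fun _ => True) precstar.
Proof.
have [c [c' _ c'K] c_ref] := exists_refining_coords hdense hlin hreal.
have key_lin (S : Qpt n -> Prop) i := linear_order_key S (@lexi_key_inj n (c i)).
exists (fun i a b => (lexi_key (c i) a < lexi_key (c i) b)%O); split; [|split].
- by move=> i; apply: key_lin.
- move=> i a b Da Db; have coord_lin := coord_linear_order (c i) hcoord.
  rewrite -(linear_order_sub_iff (hlin i) coord_lin (c_ref i)) //.
  apply: linear_order_sub_iff (key_lin D i) coord_lin _ a b Da Db.
  by move=> x y _ _; apply: lexi_key_lt_coord.
- move=> a b _ _; split=> [ab i|ab]; first exact: lexi_key_lt_prod.
  split=> [k|eab]; first by have := ltxi_lehead (ab (c' k)); rewrite c'K.
  have i0 : 'I_n := Ordinal (ltnW hn).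
  by have := ab i0; rewrite eab ltxx.
Qed.
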